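(* Let $\mathbf V$ be a monoid variety and let $f:\Sigma^\ast\to\Sigma^\ast$ be a rational partial function such that $\mathrm{dom}(f)$ is a $\mathbf V$-language. Then $f$ is definable by an unambiguous $\mathbf V$-NFT if and only if its completion $\bar f$ is definable by an unambiguous $\mathbf V$-NFT.
   Context: The completion of $f$ is the total function $\bar f:\Sigma^\ast\to(\Sigma\uplus\{\bot\})^\ast$ with $\bar f(u)=f(u)$ if $u\in\mathrm{dom}(f)$ and $\bar f(u)=\bot$ otherwise ($\bot$ a fresh output letter). A (real-time) NFT is $T=(Q,I,F,\Delta,i,t)$ with partial $\Delta:Q\times\Sigma\times Q\to\Gamma^\ast$, $i:I\to\Gamma^\ast$, $t:F\to\Gamma^\ast$ ($\Gamma$ an output alphabet), relating $u$ to $i(q_0)wt(q_f)$ for each successful run $q_0\xrightarrow{u\mid w}q_f$; rational functions are those defined by NFTs. It is unambiguous if its underlying automaton (outputs forgotten) has at most one successful run on each word. The transition monoid of an automaton with states $Q$ is $\Sigma^\ast/\equiv$ where $u\equiv v$ iff for all $p,q$ there is a run $p\to q$ on $u$ iff on $v$; a $\mathbf V$-automaton ($\mathbf V$-NFT) is one whose (underlying automaton's) transition monoid is in $\mathbf V$; a $\mathbf V$-language is a language recognized by a $\mathbf V$-automaton. *)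

From mathcomp Require Import all_boot.
Set Implicit Arguments. Unset Strict Implicit. Unset Printing Implicit Defensive.

Record finMonoid := FinMonoid {
  mcar :> finType;
  mmul : mcar -> mcar -> mcar;
  mone : mcar;
  mmulA : forall x y z, mmul x (mmul y z) = mmul (mmul x y) z;
  mmul1l : forall x, mmul mone x = x;
  mmul1r : forall x, mmul x mone = x }.

Definition is_hom (M N : finMonoid) (f : M -> N) : Prop :=
  f (mone M) = mone N /\ forall x y, f (mmul x y) = mmul (f x) (f y).

Definition prodM (M N : finMonoid) : finMonoid.
Proof.
refine (@FinMonoid (M * N)%type
  (fun x y => (mmul x.1 y.1, mmul x.2 y.2)) (mone M, mone N) _ _ _).
- by move=> [a b] [c d] [e g] /=; rewrite !mmulA.
- by move=> [a b] /=; rewrite !mmul1l.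
- by move=> [a b] /=; rewrite !mmul1r.
Defined.

Definition trivM : finMonoid.
Proof.
refine (@FinMonoid unit (fun _ _ => tt) tt _ _ _).
- by [].
- by case.
- by case.
Defined.

(* A monoid variety (pseudovariety of finite monoids): a class of finite
   monoids closed under submonoids, homomorphic images (quotients) and finite
   direct products (binary products and the empty product). *)
Record variety := Variety {
  vmem :> finMonoid -> Prop;
  v_sub : forall (M N : finMonoid) (f : M -> N),
      is_hom f -> injective f -> vmem N -> vmem M;
  v_quot : forall (M N : finMonoid) (f : M -> N),
      is_hom f -> (forall y, exists x, f x = y) -> vmem M -> vmem N;
  v_prod : forall M N, vmem M -> vmem N -> vmem (prodM M N);
  v_triv : vmem trivM }.

Section Automata.
Variable Sigma : Type.

Record nfa := Nfa {
  nQ : finType;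
  ninit : nQ -> bool;
  nfin : nQ -> bool;
  ntrans : nQ -> Sigma -> nQ -> bool }.

(* [path_ok A p u qs]: qs lists the states visited after p while reading u *)
Fixpoint path_ok (A : nfa) (p : nQ A) (u : seq Sigma) (qs : seq (nQ A)) : Prop :=
  match u, qs with
  | [::], [::] => True
  | a :: u', q :: qs' => ntrans p a q /\ path_ok q u' qs'
  | _, _ => False
  end.

Definition reach (A : nfa) (p : nQ A) (u : seq Sigma) (q : nQ A) : Prop :=
  exists qs, path_ok p u qs /\ last p qs = q.

Definition succ_run (A : nfa) (u : seq Sigma) (r : nQ A * seq (nQ A)) : Prop :=
  ninit r.1 /\ path_ok r.1 u r.2 /\ nfin (last r.1 r.2).

Definition accepts (A : nfa) (u : seq Sigma) : Prop := exists r, @succ_run A u r.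

Definition unambiguous_nfa (A : nfa) : Prop :=
  forall u r1 r2, @succ_run A u r1 -> @succ_run A u r2 -> r1 = r2.

(* u == v in the transition monoid *)
Definition trans_equiv (A : nfa) (u v : seq Sigma) : Prop :=
  forall p q, @reach A p u q <-> @reach A p v q.

(* The transition monoid Sigma^*/== belongs to V, i.e. it is isomorphic to a
   member of V: there is a surjective monoid morphism from (Sigma^*, ++, [::])
   onto some M in V whose kernel is exactly ==. *)
Definition trans_monoid_in (V : variety) (A : nfa) : Prop :=
  exists (M : finMonoid) (phi : seq Sigma -> M),
    V M /\
    phi [::] = mone M /\
    (forall u v, phi (u ++ v) = mmul (phi u) (phi v)) /\
    (forall m, exists u, phi u = m) /\
    (forall u v, phi u = phi v <-> trans_equiv A u v).

Definition V_language (V : variety) (L : seq Sigma -> Prop) : Prop :=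
  exists A : nfa, trans_monoid_in V A /\ forall u, accepts A u <-> L u.

Variable Gamma : Type.

Record nft := Nft {
  tQ : finType;
  tinit : tQ -> option (seq Gamma);   (* Some w : initial with output i(q)=w *)
  tfin : tQ -> option (seq Gamma);    (* Some w : final with output t(q)=w *)
  tdelta : tQ -> Sigma -> tQ -> option (seq Gamma) }.

Definition underlying (T : nft) : nfa :=
  @Nfa (tQ T) (fun q => isSome (tinit q)) (fun q => isSome (tfin q))
       (fun p a q => isSome (tdelta p a q)).

Fixpoint run_out (T : nft) (p : tQ T) (u : seq Sigma) (qs : seq (tQ T)) : seq Gamma :=
  match u, qs with
  | a :: u', q :: qs' => odflt [::] (tdelta p a q) ++ run_out q u' qs'
  | _, _ => [::]
  end.

Definition nft_rel (T : nft) (u : seq Sigma) (w : seq Gamma) : Prop :=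
  exists r : tQ T * seq (tQ T),
    @succ_run (underlying T) u r /\
    w = odflt [::] (tinit r.1) ++ run_out r.1 u r.2
        ++ odflt [::] (tfin (last r.1 r.2)).

Definition defines (T : nft) (f : seq Sigma -> option (seq Gamma)) : Prop :=
  forall u w, nft_rel T u w <-> f u = Some w.

Definition rational (f : seq Sigma -> option (seq Gamma)) : Prop :=
  exists T : nft, defines T f.

Definition unamb_V_definable (V : variety) (f : seq Sigma -> option (seq Gamma)) : Prop :=
  exists T : nft, unambiguous_nfa (underlying T) /\
                  trans_monoid_in V (underlying T) /\ defines T f.

End Automata.

Definition dom (S G : Type) (f : seq S -> option (seq G)) : seq S -> Prop :=
  fun u => f u <> None.

(* completion: output alphabet G + {bot}, with bot encoded as None *)
Definition completion (S G : Type) (f : seq S -> option (seq G))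
  : seq S -> option (seq (option G)) :=
  fun u => Some (match f u with
                 | Some w => map Some w
                 | None => [:: None]
                 end).

(* From an unambiguous V-NFT for f, an unambiguous V-NFT for its completion is
   obtained by adding, as a disjoint component, the subset automaton of the
   underlying automaton: it is deterministic, accepts exactly the words outside
   dom f, and outputs bot. Conversely, from an unambiguous V-NFT for the
   completion, take its product with the subset automaton of a V-automaton for
   dom f and erase bot. Both constructions remain unambiguous, and their
   transition relations are determined by those of the ingredients, so their
   transition monoids are quotients of submonoids of products of monoids of V. *)

From mathcomp Require Import all_boot boolp.
Set Implicit Arguments. Unset Strict Implicit. Unset Printing Implicit Defensive.

Section SubsetConstruction.
Variables (S : Type) (A : nfa S).
Implicit Types (p q : nQ A) (u v : seq S) (X : {set nQ A}).

Lemma path_ok_size p u qs : path_ok p u qs -> size qs = size u.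
Proof. by elim: u p qs => [|a u IH] p [|q qs] //= [_ /IH ->]. Qed.

Lemma reach_nil p q : reach p [::] q <-> p = q.
Proof. by split=> [[[|? ?] [//= _ <-]] | <-]; last by exists [::]. Qed.

Lemma reach_cons p a u q :
  reach p (a :: u) q <-> exists p', ntrans p a p' /\ reach p' u q.
Proof.
split=> [[[|p' qs] [//= [step r] last_q]] | [p' [step [qs [r last_q]]]]].
  by exists p'; split=> //; exists qs.
by exists (p' :: qs).
Qed.

Lemma reach_cat p u v q :
  reach p (u ++ v) q <-> exists2 m, reach p u m & reach m v q.
Proof.
elim: u p => [|a u IH] p /=.
  split=> [r | [m /reach_nil -> //]]; exists p => //; exact/reach_nil.
rewrite reach_cons; split.
  move=> [p' [step /IH [m r1 r2]]]; exists m => //; apply/reach_cons; by exists p'.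
move=> [m /reach_cons [p' [step r1]] r2]; exists p'; split=> //; apply/IH; by exists m.
Qed.

Definition dstep X (a : S) : {set nQ A} := [set q | [exists p in X, ntrans p a q]].

Fixpoint traj X u : seq {set nQ A} :=
  if u is a :: u' then dstep X a :: traj (dstep X a) u' else [::].

Definition dlast X u : {set nQ A} := last X (traj X u).

Definition dinit : {set nQ A} := [set q | ninit q].

Lemma size_traj X u : size (traj X u) = size u.
Proof. by elim: u X => [|a u IH] X //=; rewrite IH. Qed.

Lemma dlastP X u q : reflect (exists2 p, p \in X & reach p u q) (q \in dlast X u).
Proof.
apply: (iffP idP).
  elim: u X => [|a u IH] X /=; first by exists q => //; apply/reach_nil.
  move/IH=> [p']; rewrite inE => /exists_inP [p pX step] r.
  by exists p => //; apply/reach_cons; exists p'.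
elim: u X => [|a u IH] X [p pX]; first by move/reach_nil <-.
move/reach_cons=> [p' [step r]]; apply: IH; exists p' => //.
by rewrite inE; apply/exists_inP; exists p.
Qed.

Lemma reach_dlast1 p u q : reach p u q <-> q \in dlast [set p] u.
Proof. by split=> [r | /dlastP [p' /set1P -> //]]; apply/dlastP; exists p; rewrite ?set11. Qed.

Lemma dlast_trans_equiv X u v : trans_equiv A u v -> dlast X u = dlast X v.
Proof.
move=> uv; apply/setP => q; apply/dlastP/dlastP => -[p pX /uv r]; by exists p.
Qed.

Lemma acceptsE u : accepts A u <-> [exists q in dlast dinit u, nfin q].
Proof.
split=> [[[q0 qs] [q0_init [r q_fin]]] | /exists_inP [q /dlastP [q0 q0_init [qs [r <-]]] q_fin]].
  apply/exists_inP; exists (last q0 qs) => //.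
  by apply/dlastP; exists q0; [rewrite inE | exists qs].
by exists (q0, qs); rewrite inE in q0_init.
Qed.

Lemma not_accepts_dlast u : ~ accepts A u -> [exists q in dlast dinit u, nfin q] = false.
Proof. by move=> nacc; apply/negbTE/negP; rewrite -acceptsE. Qed.

End SubsetConstruction.

Section RelationMonoid.
Variable Q : finType.
Implicit Types x y z : {ffun Q * Q -> bool}.

Definition rel_comp x y : {ffun Q * Q -> bool} :=
  [ffun pr => [exists q, x (pr.1, q) && y (q, pr.2)]].

Definition rel_id : {ffun Q * Q -> bool} := [ffun pr => pr.1 == pr.2].

Lemma rel_compA : associative rel_comp.
Proof.
move=> x y z; apply/ffunP => -[p r]; rewrite !ffunE /=.
apply/existsP/existsP => [[q /andP [xpq]] | [q' /andP []]].
  rewrite ffunE => /existsP [q' /andP [yqq' zq'r]].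
  by exists q'; rewrite zq'r andbT ffunE; apply/existsP; exists q; rewrite xpq.
rewrite ffunE => /existsP [q /andP [xpq yqq']] zq'r.
by exists q; rewrite xpq ffunE; apply/existsP; exists q'; rewrite yqq'.
Qed.

Lemma rel_id_comp : left_id rel_id rel_comp.
Proof.
move=> x; apply/ffunP => -[p r]; rewrite !ffunE /=.
apply/existsP/idP => [[q] | xpr]; first by rewrite ffunE /= => /andP [/eqP ->].
by exists p; rewrite ffunE eqxx.
Qed.

Lemma rel_comp_id : right_id rel_id rel_comp.
Proof.
move=> x; apply/ffunP => -[p r]; rewrite !ffunE /=.
apply/existsP/idP => [[q] | xpr]; first by rewrite ffunE /= => /andP [? /eqP <-].
by exists r; rewrite ffunE eqxx andbT.
Qed.

Definition relM : finMonoid := FinMonoid rel_compA rel_id_comp rel_comp_id.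

End RelationMonoid.

Section TransitionRelation.
Variables (S : Type) (A : nfa S).

Definition trans_rel (u : seq S) : relM (nQ A) :=
  [ffun pr => pr.2 \in dlast [set pr.1] u].

Lemma trans_relE u p q : trans_rel u (p, q) = `[< reach p u q >].
Proof. by rewrite ffunE; apply/idP/asboolP => /reach_dlast1. Qed.

Lemma trans_rel_nil : trans_rel [::] = mone (relM (nQ A)).
Proof.
apply/ffunP => -[p q]; rewrite trans_relE ffunE.
by apply/asboolP/eqP => /reach_nil.
Qed.

Lemma trans_rel_cat u v : trans_rel (u ++ v) = mmul (trans_rel u) (trans_rel v).
Proof.
apply/ffunP => -[p q]; rewrite trans_relE ffunE /=.
apply/asboolP/existsP => [/reach_cat [m r1 r2] | [m]].
  by exists m; rewrite !trans_relE; apply/andP; split; apply/asboolP.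
by rewrite !trans_relE => /andP [/asboolP r1 /asboolP r2]; apply/reach_cat; exists m.
Qed.

Lemma trans_rel_inj u v : trans_rel u = trans_rel v <-> trans_equiv A u v.
Proof.
split=> [uv p q | uv]; last first.
  by apply/ffunP => -[p q]; rewrite !trans_relE; apply/asboolP/asboolP => /uv.
move/ffunP: uv => /(_ (p, q)); rewrite !trans_relE => uv.
by split=> r; apply/asboolP; [rewrite -uv | rewrite uv]; apply/asboolP.
Qed.

End TransitionRelation.

Section ImageMonoid.
Variables (S : Type) (M : finMonoid) (phi : seq S -> M).
Hypotheses (phi_nil : phi [::] = mone M)
           (phi_cat : forall u v, phi (u ++ v) = mmul (phi u) (phi v)).

Definition in_image (x : M) : bool := `[< exists u, phi u = x >].

Lemma in_image_phi u : in_image (phi u).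
Proof. by apply/asboolP; exists u. Qed.

Lemma in_image_mul x y : in_image x -> in_image y -> in_image (mmul x y).
Proof. by move=> /asboolP [u <-] /asboolP [v <-]; rewrite -phi_cat in_image_phi. Qed.

Lemma in_image_one : in_image (mone M).
Proof. by rewrite -phi_nil in_image_phi. Qed.

Definition image_mul (x y : {x : M | in_image x}) : {x : M | in_image x} :=
  exist _ (mmul (val x) (val y)) (in_image_mul (valP x) (valP y)).

Definition image_one : {x : M | in_image x} := exist _ (mone M) in_image_one.

Lemma image_mulA : associative image_mul.
Proof. by move=> x y z; apply: val_inj; apply: mmulA. Qed.

Lemma image_one_mul : left_id image_one image_mul.
Proof. by move=> x; apply: val_inj; apply: mmul1l. Qed.

Lemma image_mul_one : right_id image_one image_mul.
Proof. by move=> x; apply: val_inj; apply: mmul1r. Qed.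

Definition imageM : finMonoid := FinMonoid image_mulA image_one_mul image_mul_one.

Definition to_image u : imageM := exist _ (phi u) (in_image_phi u).

Lemma to_image_nil : to_image [::] = mone imageM.
Proof. by apply: val_inj; rewrite /= phi_nil. Qed.

Lemma to_image_cat u v : to_image (u ++ v) = mmul (to_image u) (to_image v).
Proof. by apply: val_inj; rewrite /= phi_cat. Qed.

Lemma to_image_onto (x : imageM) : exists u, to_image u = x.
Proof. by case: x => x /[dup] /asboolP [u ux] xP; exists u; apply: val_inj. Qed.

Lemma to_image_inj u v : to_image u = to_image v <-> phi u = phi v.
Proof. by split=> [/(congr1 val) | uv]; last apply: val_inj. Qed.

Lemma imageM_in_variety (V : variety) : V M -> V imageM.
Proof. by apply: (@v_sub V imageM M val) => //; apply: val_inj. Qed.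

End ImageMonoid.

Section ImageFactor.
Variables (S : Type) (M N : finMonoid) (phi : seq S -> M) (psi : seq S -> N).
Hypotheses (phi_nil : phi [::] = mone M)
           (phi_cat : forall u v, phi (u ++ v) = mmul (phi u) (phi v))
           (psi_nil : psi [::] = mone N)
           (psi_cat : forall u v, psi (u ++ v) = mmul (psi u) (psi v)).
Hypothesis ker_sub : forall u v, phi u = phi v -> psi u = psi v.

Local Notation to_imM := (to_image phi_nil phi_cat).
Local Notation to_imN := (to_image psi_nil psi_cat).

Definition image_factor (x : imageM phi_nil phi_cat) : imageM psi_nil psi_cat :=
  to_imN (sval (cid (to_image_onto x))).

Lemma image_factorE u : image_factor (to_imM u) = to_imN u.
Proof.
rewrite /image_factor; case: cid => w /= /to_image_inj /ker_sub wu.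
exact/to_image_inj.
Qed.

Lemma image_factor_in_variety (V : variety) :
  V (imageM phi_nil phi_cat) -> V (imageM psi_nil psi_cat).
Proof.
apply: (@v_quot V _ _ image_factor).
  split; first by rewrite -!to_image_nil image_factorE.
  move=> x y; have [u <-] := to_image_onto x; have [v <-] := to_image_onto y.
  by rewrite -to_image_cat !image_factorE to_image_cat.
move=> y; have [u <-] := to_image_onto y.
by exists (to_imM u); rewrite image_factorE.
Qed.

End ImageFactor.

Lemma trans_monoid_in_of_refinement (S : Type) (V : variety) (B : nfa S)
    (M : finMonoid) (phi : seq S -> M) :
  V M -> phi [::] = mone M -> (forall u v, phi (u ++ v) = mmul (phi u) (phi v)) ->
  (forall u v, phi u = phi v -> trans_equiv B u v) -> trans_monoid_in V B.
Proof.
move=> VM phi_nil phi_cat ker_sub.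
have ker_rel u v : phi u = phi v -> trans_rel B u = trans_rel B v.
  by move/ker_sub/trans_rel_inj.
have VN := image_factor_in_variety (trans_rel_nil B) (@trans_rel_cat _ B) ker_rel
  (imageM_in_variety phi_nil phi_cat VM).
exists _, (to_image (trans_rel_nil B) (@trans_rel_cat _ B)); split=> //.
split; first exact: to_image_nil.
split; first exact: to_image_cat.
split; first exact: to_image_onto.
by move=> u v; rewrite to_image_inj trans_rel_inj.
Qed.

Lemma trans_monoid_in_coarser (S : Type) (V : variety) (A B : nfa S) :
  trans_monoid_in V A -> (forall u v, trans_equiv A u v -> trans_equiv B u v) ->
  trans_monoid_in V B.
Proof.
move=> [M [phi [VM [phi_nil [phi_cat [_ ker]]]]]] AB.
by apply: (trans_monoid_in_of_refinement VM phi_nil phi_cat) => u v /ker /AB.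
Qed.

Lemma trans_monoid_in_coarser2 (S : Type) (V : variety) (A1 A2 B : nfa S) :
  trans_monoid_in V A1 -> trans_monoid_in V A2 ->
  (forall u v, trans_equiv A1 u v -> trans_equiv A2 u v -> trans_equiv B u v) ->
  trans_monoid_in V B.
Proof.
move=> [M1 [phi1 [VM1 [nil1 [cat1 [_ ker1]]]]]] [M2 [phi2 [VM2 [nil2 [cat2 [_ ker2]]]]]] AB.
apply: (@trans_monoid_in_of_refinement _ _ _ (prodM M1 M2) (fun u => (phi1 u, phi2 u))).
- exact: v_prod.
- by rewrite nil1 nil2.
- by move=> u v; rewrite cat1 cat2.
- by move=> u v [/ker1 + /ker2]; apply: AB.
Qed.

Definition run_output (S G : Type) (T : nft S G) (u : seq S) (r : tQ T * seq (tQ T)) :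
  seq G := odflt [::] (tinit r.1) ++ run_out r.1 u r.2 ++ odflt [::] (tfin (last r.1 r.2)).

Lemma nft_relP (S G : Type) (T : nft S G) u w :
  nft_rel T u w <-> exists2 r, succ_run (A := underlying T) u r & w = run_output u r.
Proof. by split=> [[r [run ->]] | [r run ->]]; exists r. Qed.

Lemma defines_accepts (S G : Type) (T : nft S G) (f : seq S -> option (seq G)) u :
  defines T f -> accepts (underlying T) u <-> f u <> None.
Proof.
move=> Tf; split=> [[r run] | ].
  suff /Tf -> : nft_rel T u (run_output u r) by [].
  by apply/nft_relP; exists r.
by case fu: (f u) => [w|] // _; have /nft_relP [r run _] := iffRL (Tf u w) fu; exists r.
Qed.

Section Completion.
Variables (S G : Type) (T : nft S G).
Local Notation D := (underlying T).

Definition lift_out (o : option (seq G)) : option (seq (option G)) := omap (map Some) o.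

Lemma isSome_lift_out o : isSome (lift_out o) = isSome o.
Proof. by case: o. Qed.

Lemma odflt_lift_out o : odflt [::] (lift_out o) = map Some (odflt [::] o).
Proof. by case: o. Qed.

(* The left summand runs T with lifted outputs; the right summand is the subset
   automaton of T, accepting exactly the words T rejects, with output bot. *)
Definition completion_nft : nft S (option G) :=
  @Nft S (option G) (tQ T + {set tQ T})%type
  (fun x => match x with
     | inl q => lift_out (tinit q)
     | inr X => if X == dinit D then Some [::] else None end)
  (fun x => match x with
     | inl q => lift_out (tfin q)
     | inr X => if [exists q in X, isSome (tfin q)] then None else Some [:: None] end)
  (fun x a y => match x, y with
     | inl p, inl q => lift_out (tdelta p a q)
     | inr X, inr Y => if Y == dstep (A := D) X a then Some [::] else None
     | _, _ => None end).

Local Notation C := (underlying completion_nft).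

Lemma completion_path_inl u p qs :
  path_ok (A := C) (inl p) u qs <->
  exists2 qs', qs = map inl qs' & path_ok (A := D) p u qs'.
Proof.
elim: u p qs => [|a u IH] p [|[q|Y] qs] /=.
- by split=> // _; exists [::].
- by split=> // -[[|? ?]].
- by split=> // -[[|? ?]].
- by split=> // -[[|? ?]].
- rewrite isSome_lift_out IH; split=> [[step [qs' -> r]] | [[//|q' qs'] [<- ->] [step r]]].
    by exists (q :: qs').
  by split=> //; exists qs'.
- by split=> [[] // | [[|? ?]]].
Qed.

Lemma completion_path_inr u X qs :
  path_ok (A := C) (inr X) u qs <-> qs = map inr (traj (A := D) X u).
Proof.
elim: u X qs => [|a u IH] X [|[q|Y] qs] //=; first by split=> [[] // | []].
rewrite IH; split=> [[+ ->] | [-> ->]]; last by rewrite eqxx.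
by case: eqP => // ->.
Qed.

Lemma completion_run_inl u p qs :
  succ_run (A := C) u (inl p, qs) <->
  exists2 qs', qs = map inl qs' & succ_run (A := D) u (p, qs').
Proof.
rewrite /succ_run /= isSome_lift_out; split.
  move=> [p_init [/completion_path_inl [qs' -> r]]].
  by rewrite last_map /= isSome_lift_out => q_fin; exists qs'.
move=> [qs' -> [p_init [r q_fin]]]; rewrite last_map /= isSome_lift_out.
by split=> //; split=> //; apply/completion_path_inl; exists qs'.
Qed.

Lemma completion_run_inr u X qs :
  succ_run (A := C) u (inr X, qs) <->
  [/\ X = dinit D, qs = map inr (traj (A := D) X u) & ~ accepts D u].
Proof.
rewrite /succ_run /=; split.
  move=> [+ [/completion_path_inr -> +]]; rewrite last_map /=.
  case: eqP => // -> _; case: ifP => // nacc _.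
  by split=> //; rewrite acceptsE /dlast nacc.
move=> [-> -> /not_accepts_dlast nacc]; rewrite eqxx last_map /=.
by split=> //; split; [apply/completion_path_inr | rewrite nacc].
Qed.

Lemma completion_reach_inl u p y :
  reach (A := C) (inl p) u y <-> exists2 q, y = inl q & reach (A := D) p u q.
Proof.
split=> [[qs [/completion_path_inl [qs' -> r] <-]] | [q -> [qs' [r <-]]]].
  by rewrite last_map; exists (last p qs') => //; exists qs'.
by exists (map inl qs'); rewrite last_map; split=> //; apply/completion_path_inl; exists qs'.
Qed.

Lemma completion_reach_inr u X y :
  reach (A := C) (inr X) u y <-> y = inr (dlast (A := D) X u).
Proof.
split=> [[qs [/completion_path_inr -> <-]] | ->]; first by rewrite last_map.
by exists (map inr (traj (A := D) X u)); rewrite last_map; split=> //; apply/completion_path_inr.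
Qed.

Lemma completion_output_inl u p qs :
  run_output (T := completion_nft) u (inl p, map inl qs) = map Some (run_output u (p, qs)).
Proof.
have out_inl q qs' :
    run_out (T := completion_nft) (inl q) u (map inl qs') = map Some (run_out q u qs').
  by elim: u q qs' => [|a u IH] q [|q' qs'] //=; rewrite IH odflt_lift_out map_cat.
by rewrite /run_output /= out_inl last_map /= !odflt_lift_out !map_cat.
Qed.

Lemma completion_output_inr u :
  ~ accepts D u ->
  run_output (T := completion_nft) u (inr (dinit D), map inr (traj (A := D) (dinit D) u)) =
  [:: None].
Proof.
have out_inr X : run_out (T := completion_nft) (inr X) u (map inr (traj (A := D) X u)) = [::].
  by elim: u X => [|a u IH] X //=; rewrite eqxx IH.
move/not_accepts_dlast=> nacc.
by rewrite /run_output /= eqxx out_inr last_map /= nacc.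
Qed.

Lemma completion_nft_unambiguous : unambiguous_nfa D -> unambiguous_nfa C.
Proof.
move=> unD u [[p1|X1] qs1] [[p2|X2] qs2].
- move=> /completion_run_inl [qs1' -> r1] /completion_run_inl [qs2' -> r2].
  by case: (unD _ _ _ r1 r2) => -> ->.
- move=> /completion_run_inl [qs1' _ r1] /completion_run_inr [_ _ nacc].
  by case: nacc; exists (p1, qs1').
- move=> /completion_run_inr [_ _ nacc] /completion_run_inl [qs2' _ r2].
  by case: nacc; exists (p2, qs2').
- by move=> /completion_run_inr [-> -> _] /completion_run_inr [-> -> _].
Qed.

Lemma completion_nft_trans_monoid (V : variety) :
  trans_monoid_in V D -> trans_monoid_in V C.
Proof.
move=> VD; apply: (trans_monoid_in_coarser VD) => u v uv [p|X] y.
  by rewrite !completion_reach_inl; split=> -[q -> /uv r]; exists q.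
by rewrite !completion_reach_inr (dlast_trans_equiv _ uv).
Qed.

Lemma completion_nft_defines (f : seq S -> option (seq G)) :
  defines T f -> defines completion_nft (completion f).
Proof.
move=> Tf u w; rewrite nft_relP /completion; split.
  move=> [[[p|X] qs] + ->].
    move=> /completion_run_inl [qs' -> r]; rewrite completion_output_inl.
    suff -> : f u = Some (run_output u (p, qs')) by [].
    by apply/Tf/nft_relP; exists (p, qs').
  move=> /completion_run_inr [-> -> nacc]; rewrite completion_output_inr //.
  by case fu: (f u) => [w'|] //; case: nacc; apply/(defines_accepts u Tf); rewrite fu.
case fu: (f u) => [w'|] [<-].
  have /nft_relP [[p qs] r ->] := iffRL (Tf u w') fu.
  exists (inl p, map inl qs); last by rewrite completion_output_inl.
  by apply/completion_run_inl; exists qs.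
have nacc : ~ accepts D u by move/(defines_accepts u Tf); rewrite fu.
exists (inr (dinit D), map inr (traj (A := D) (dinit D) u)).
  exact/completion_run_inr.
by rewrite completion_output_inr.
Qed.

End Completion.

Lemma unamb_V_definable_completion (S G : Type) (V : variety) (f : seq S -> option (seq G)) :
  unamb_V_definable V f -> unamb_V_definable V (completion f).
Proof.
move=> [T [unT [VT Tf]]]; exists (completion_nft T); split.
  exact: completion_nft_unambiguous.
by split; [apply: completion_nft_trans_monoid | apply: completion_nft_defines].
Qed.

Section Restriction.
Variables (S G : Type) (T : nft S (option G)) (A : nfa S).
Local Notation D := (underlying T).

Definition strip (s : seq (option G)) : seq G := pmap id s.

Definition strip_out (o : option (seq (option G))) : option (seq G) := omap strip o.

Lemma isSome_strip_out o : isSome (strip_out o) = isSome o.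
Proof. by case: o. Qed.

Lemma odflt_strip_out o : odflt [::] (strip_out o) = strip (odflt [::] o).
Proof. by case: o. Qed.

Lemma strip_map_Some (w : seq G) : strip (map Some w) = w.
Proof. exact: (@map_pK _ _ id Some (fun _ => erefl)). Qed.

(* Product of T with the subset automaton of A, accepting where both do; the
   output letters bot are erased. *)
Definition restrict_nft : nft S G :=
  @Nft S G (tQ T * {set nQ A})%type
   (fun x => if x.2 == dinit A then strip_out (tinit x.1) else None)
   (fun x => if [exists q in x.2, nfin q] then strip_out (tfin x.1) else None)
   (fun x a y => if y.2 == dstep x.2 a then strip_out (tdelta x.1 a y.1) else None).

Local Notation R := (underlying restrict_nft).

Lemma restrict_path u (x : tQ restrict_nft) qs :
  path_ok (A := R) x u qs <->
  path_ok (A := D) x.1 u (map fst qs) /\ map snd qs = traj x.2 u.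
Proof.
elim: u x qs => [|a u IH] x [|y qs] //=; try by split=> -[].
rewrite IH; case: eqP => [-> | ne]; last by split=> [[] // | [_ [/ne]]].
by rewrite isSome_strip_out; split=> [[step [r ->]] | [[step r] [->]]].
Qed.

Lemma restrict_run u (x : tQ restrict_nft) qs :
  succ_run (A := R) u (x, qs) <->
  [/\ x.2 = dinit A, map snd qs = traj (dinit A) u, accepts A u &
      succ_run (A := D) u (x.1, map fst qs)].
Proof.
rewrite /succ_run /=.
have last2 : x.2 = dinit A -> map snd qs = traj (dinit A) u ->
    (last x qs).2 = dlast (dinit A) u.
  by move=> x2 snd_qs; rewrite /dlast -snd_qs -x2 last_map.
split.
  move=> [+ [/restrict_path [r snd_qs]]]; case: eqP => // x2 x_init.
  rewrite x2 in snd_qs; rewrite last2 //; case: ifP => // acc q_fin.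
  rewrite isSome_strip_out in x_init; rewrite isSome_strip_out -last_map in q_fin.
  by split=> //; apply/acceptsE.
move=> [x2 snd_qs /acceptsE acc [x_init [r q_fin]]].
rewrite x2 eqxx last2 // acc !isSome_strip_out -last_map.
by split=> //; split=> //; apply/restrict_path; rewrite x2.
Qed.

Lemma zip_traj_unzip (X : {set nQ A}) u (qs : seq (tQ T)) :
  size qs = size u ->
  map fst (zip qs (traj X u)) = qs /\ map snd (zip qs (traj X u)) = traj X u.
Proof. by move=> qs_u; split; [apply: unzip1_zip | apply: unzip2_zip]; rewrite size_traj qs_u. Qed.

Lemma restrict_reach u (x y : tQ restrict_nft) :
  reach (A := R) x u y <-> reach (A := D) x.1 u y.1 /\ y.2 = dlast x.2 u.
Proof.
split=> [[qs [/restrict_path [r snd_qs] <-]] | [[qs [r last_qs]] y2]].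
  by split; [exists (map fst qs); rewrite last_map | rewrite /dlast -snd_qs last_map].
have [fst_zs snd_zs] := zip_traj_unzip x.2 (path_ok_size r).
exists (zip qs (traj x.2 u)); split; first by apply/restrict_path; rewrite fst_zs snd_zs.
apply/injective_projections.
  by rewrite -last_map fst_zs last_qs.
by rewrite -last_map snd_zs y2.
Qed.

Lemma restrict_output u r :
  succ_run (A := R) u r ->
  run_output u r = strip (run_output (T := T) u (r.1.1, map fst r.2)).
Proof.
case: r => x qs /[dup] run /restrict_run [x2 snd_qs acc _].
have out qs' x' : path_ok (A := R) x' u qs' ->
    run_out (T := restrict_nft) x' u qs' = strip (run_out x'.1 u (map fst qs')).
  elim: u x' qs' {run snd_qs acc} => [|a u IH] x' [|y qs'] //= [+ /IH ->].
  by rewrite /strip pmap_cat; case: eqP => // _ _; rewrite odflt_strip_out.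
have last2 : (last x qs).2 = dlast (dinit A) u by rewrite /dlast -snd_qs -x2 last_map.
rewrite /run_output /= (out _ _ run.2.1) x2 eqxx last2.
rewrite acceptsE in acc.
by rewrite acc !odflt_strip_out /strip !pmap_cat last_map.
Qed.

Lemma restrict_nft_unambiguous : unambiguous_nfa D -> unambiguous_nfa R.
Proof.
move=> unD u [x1 qs1] [x2 qs2] /restrict_run [x12 snd1 _ r1] /restrict_run [x22 snd2 _ r2].
case: (unD _ _ _ r1 r2) => x11 fst12.
have -> : qs1 = qs2 by rewrite -(zip_unzip qs1) -(zip_unzip qs2) /unzip1 /unzip2 fst12 snd1 snd2.
by congr (_, _); apply/injective_projections; rewrite ?x12 ?x22.
Qed.

Lemma restrict_nft_trans_monoid (V : variety) :
  trans_monoid_in V D -> trans_monoid_in V A -> trans_monoid_in V R.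
Proof.
move=> VD VA; apply: (trans_monoid_in_coarser2 VD VA) => u v uvD uvA x y.
by rewrite !restrict_reach (dlast_trans_equiv _ uvA); split=> -[/uvD].
Qed.

Lemma restrict_nft_defines (f : seq S -> option (seq G)) :
  (forall u, accepts A u <-> f u <> None) ->
  defines T (completion f) -> defines restrict_nft f.
Proof.
move=> Af Tf u w; rewrite nft_relP; split.
  move=> [[x qs] /[dup] run /restrict_run [_ _ /Af + rD] ->]; rewrite restrict_output //=.
  case fu: (f u) => [w'|] // _.
  suff /Tf : nft_rel T u (run_output u (x.1, map fst qs)).
    by rewrite /completion fu => -[<-]; rewrite strip_map_Some.
  by apply/nft_relP; exists (x.1, map fst qs).
move=> fu; have acc : accepts A u by apply/Af; rewrite fu.
have /Tf/nft_relP [[p qs] rD out] : completion f u = Some (map Some w).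
  by rewrite /completion fu.
have [fst_zs snd_zs] := zip_traj_unzip (dinit A) (path_ok_size rD.2.1).
have run : succ_run (A := R) u ((p, dinit A), zip qs (traj (dinit A) u)).
  by apply/restrict_run; rewrite fst_zs snd_zs.
exists ((p, dinit A), zip qs (traj (dinit A) u)) => //.
by rewrite restrict_output //= fst_zs -out strip_map_Some.
Qed.

End Restriction.

Lemma unamb_V_definable_of_completion (S G : Type) (V : variety) (f : seq S -> option (seq G)) :
  V_language V (dom f) -> unamb_V_definable V (completion f) -> unamb_V_definable V f.
Proof.
move=> [A [VA Af]] [T [unT [VT Tf]]]; exists (restrict_nft T A); split.
  exact: restrict_nft_unambiguous.
by split; [apply: restrict_nft_trans_monoid | apply: restrict_nft_defines].
Qed.

Theorem mainTheorem16 (Sigma : finType) (V : variety)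
  (f : seq Sigma -> option (seq Sigma)) :
  rational f ->
  V_language V (dom f) ->
  (unamb_V_definable V f <-> unamb_V_definable V (completion f)).
Proof.
move=> _ Vdom; split; first exact: unamb_V_definable_completion.
exact: unamb_V_definable_of_completion.
Qed.
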